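(* Let $f:\mathbb{R}^n\to\mathbb{R}$ be differentiable and pseudo-convex, with $\nabla f$ $L$-Lipschitz continuous, and assume the stationary set $X^*$ is non-empty. Then the sequence $\{x^k\}$ generated by Algorithm 2 (with $\nabla f(x^k)\ne0$ for all $k$) satisfies, for every $x^*\in X^*$ and every integer $K\ge1$, $$\frac1K\sum_{k=0}^{K-1}\|\nabla f(x^k)\|^2\le\frac{\|x^0-x^*\|^2}{K\kappa_2h_{\min}^2},$$ where $\kappa_2=2\beta-1-\beta^2\nu^2$ and $h_{\min}=\min\left\{\underline{h},\frac{\nu\theta}{\overline{h}\max\{L,1\}^2}\right\}$.
   Context: Pseudo-convex: $\nabla f$ pseudo-monotone, i.e. $\langle \nabla f(x),y-x\rangle\ge0\Rightarrow\langle\nabla f(y),y-x\rangle\ge0$ for all $x,y$. $X^*=\{x:\nabla f(x)=0\}$. Algorithm 2: parameters $0<\mu<\nu<1$, $0<\underline{h}<1\le\gamma_0^0\le\overline{h}$, $\theta\in(0,1)$, $\tau>1$, $\beta\in\left(\frac{1-\sqrt{1-\nu^2}}{\nu^2},1\right]$, starting point $x^0$. At iteration $k$: for $\gamma>0$ let $z^k(\gamma)=x^k-\gamma\nabla f(x^k)$ and $r_k(\gamma)=\gamma\|\nabla f(z^k(\gamma))-\nabla f(x^k)\|/\|z^k(\gamma)-x^k\|$; starting from $\gamma_0^k$, while $r_k(\gamma_l^k)>\nu$ set $\gamma_{l+1}^k=\gamma_l^k\theta\min\{1,1/r_k(\gamma_l^k)\}$; let $h_k$ be the first $\gamma_l^k$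 with $r_k(\gamma_l^k)\le\nu$. Then $z^k=x^k-h_k\nabla f(x^k)$, $x^{k+1}=x^k-h_k\big(\nabla f(x^k)-\beta(\nabla f(x^k)-\nabla f(z^k))\big)$, and $\gamma_0^{k+1}=\mathbf{P}_{[\underline{h},\overline{h}]}(\tau h_k)$ if $r_k(h_k)\le\mu$, else $\gamma_0^{k+1}=\mathbf{P}_{[\underline{h},\overline{h}]}(h_k)$, where $\mathbf{P}_{[a,b]}$ is projection onto $[a,b]$. *)

From HB Require Import structures.
From mathcomp Require Import all_boot all_order all_algebra.
From mathcomp Require Import all_classical all_reals all_analysis.
Set Implicit Arguments. Unset Strict Implicit. Unset Printing Implicit Defensive.
Import Order.TTheory GRing.Theory Num.Theory.
Import numFieldNormedType.Exports.
Local Open Scope ring_scope.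

Section Defs.
Variables (R : realType) (n : nat).
Local Notation vec := 'rV[R]_n.

Definition dot (u v : vec) : R := \sum_(i < n) u ord0 i * v ord0 i.
Definition enorm (u : vec) : R := Num.sqrt (dot u u).

Definition is_gradient (f : vec -> R) (g : vec -> vec) : Prop :=
  forall x, differentiable f x /\ forall h : vec, ('d f x : vec -> R) h = dot h (g x).

(* pseudo-monotonicity of the gradient (= pseudo-convexity of f) *)
Definition pseudo_monotone (g : vec -> vec) : Prop :=
  forall x y, 0 <= dot (g x) (y - x) -> 0 <= dot (g y) (y - x).

Definition lipschitz_with (L : R) (g : vec -> vec) : Prop :=
  forall x y, enorm (g x - g y) <= L * enorm (x - y).

Definition proj_itv (a b t : R) : R := Num.max a (Num.min b t).

Definition zk (g : vec -> vec) (x : vec) (gam : R) : vec := x - gam *: g x.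
Definition rk (g : vec -> vec) (x : vec) (gam : R) : R :=
  gam * enorm (g (zk g x gam) - g x) / enorm (zk g x gam - x).

Fixpoint bt (theta : R) (g : vec -> vec) (x : vec) (gam0 : R) (l : nat) : R :=
  match l with
  | O => gam0
  | S l' => let gl := bt theta g x gam0 l' in
            gl * theta * Num.min 1 (1 / rk g x gl)
  end.

Definition algorithm2 (g : vec -> vec) (mu nu hlo hhi theta tau beta : R)
  (x0 : vec) (x : nat -> vec) (h : nat -> R) (gam0 : nat -> R) : Prop :=
  x 0%N = x0 /\
  forall k : nat,
    (exists lk : nat,
        (forall l, (l < lk)%N -> nu < rk g (x k) (bt theta g (x k) (gam0 k) l)) /\
        rk g (x k) (bt theta g (x k) (gam0 k) lk) <= nu /\
        h k = bt theta g (x k) (gam0 k) lk) /\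
    x k.+1 = x k - h k *: (g (x k) - beta *: (g (x k) - g (zk g (x k) (h k)))) /\
    gam0 k.+1 = (if rk g (x k) (h k) <= mu then proj_itv hlo hhi (tau * h k)
                 else proj_itv hlo hhi (h k)).

End Defs.

From HB Require Import structures.
From mathcomp Require Import all_boot all_order all_algebra.
From mathcomp Require Import all_classical all_reals all_analysis.
From mathcomp Require Import ring lra.
Set Implicit Arguments. Unset Strict Implicit. Unset Printing Implicit Defensive.
Import Order.TTheory GRing.Theory Num.Theory.
Local Open Scope ring_scope.

(* Pseudo-monotonicity of g, tested against a stationary point x*, gives
   <g(x^k), x^k - x*> >= 0 and <g(z^k), z^k - x*> >= 0.  Together with the
   stopping rule ||g(z^k) - g(x^k)|| <= nu ||g(x^k)|| of the backtracking,
   expanding ||x^{k+1} - x*||^2 yields the Fejer-type descent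
   ||x^{k+1} - x*||^2 <= ||x^k - x*||^2 - kappa2 h_k^2 ||g(x^k)||^2,
   where kappa2 > 0 by the choice of beta.  Lipschitz continuity gives
   r_k(gamma) <= gamma L, so the backtracking never drops the step below
   h_min; summing the descent over k < K telescopes to the bound. *)

Section InnerProduct.
Variables (R : realType) (n : nat).
Implicit Types (u v w : 'rV[R]_n).

Lemma dotC u v : dot u v = dot v u.
Proof. by apply: eq_bigr => i _; rewrite mulrC. Qed.

Lemma dotDl u v w : dot (u + v) w = dot u w + dot v w.
Proof. by rewrite /dot -big_split; apply: eq_bigr => i _; rewrite !mxE mulrDl. Qed.

Lemma dotZl c u v : dot (c *: u) v = c * dot u v.
Proof. by rewrite /dot mulr_sumr; apply: eq_bigr => i _; rewrite !mxE mulrA. Qed.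

Lemma dotNl u v : dot (- u) v = - dot u v.
Proof. by rewrite -scaleN1r dotZl mulN1r. Qed.

Lemma dotBl u v w : dot (u - v) w = dot u w - dot v w.
Proof. by rewrite dotDl dotNl. Qed.

Lemma dotZr c u v : dot v (c *: u) = c * dot v u.
Proof. by rewrite dotC dotZl dotC. Qed.

Lemma dotBr u v w : dot w (u - v) = dot w u - dot w v.
Proof. by rewrite dotC dotBl !(dotC w). Qed.

Lemma dot0l v : dot 0 v = 0.
Proof. by rewrite -(scale0r (0 : 'rV[R]_n)) dotZl mul0r. Qed.

Lemma dot_ge0 u : 0 <= dot u u.
Proof. by apply: sumr_ge0 => i _; rewrite -expr2 sqr_ge0. Qed.

Lemma dot_eq0 u : dot u u = 0 -> u = 0.
Proof.
move=> u0; apply/rowP => i; rewrite mxE.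
have sq_ge0 (j : 'I_n) : xpredT j -> 0 <= u ord0 j * u ord0 j.
  by rewrite -expr2 sqr_ge0.
have := @psumr_eq0P _ _ xpredT _ sq_ge0 u0 i isT.
by rewrite ord1 => /eqP; rewrite mulf_eq0 orbb => /eqP.
Qed.

Lemma enorm_ge0 u : 0 <= enorm u.
Proof. exact: sqrtr_ge0. Qed.

Lemma enorm_sq u : enorm u ^+ 2 = dot u u.
Proof. by rewrite /enorm sqr_sqrtr // dot_ge0. Qed.

Lemma enormZ c u : enorm (c *: u) = `|c| * enorm u.
Proof. by rewrite /enorm dotZl dotZr mulrA -expr2 sqrtrM ?sqr_ge0 // sqrtr_sqr. Qed.

Lemma enorm_gt0 u : u != 0 -> 0 < enorm u.
Proof.
move=> u_neq0; rewrite /enorm sqrtr_gt0 lt_def dot_ge0 andbT.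
by apply: contraNneq u_neq0 => /dot_eq0 ->.
Qed.

(* Expanding the square, the left side minus the right side equals
   -2h(1-beta)<a,P> - 2h beta(<b,P - h a>) + h^2 beta^2 (||b-a||^2 - nu^2||a||^2). *)
Lemma dist_extragradient_step (P a b : 'rV[R]_n) (h nu beta : R) :
  0 <= h -> 0 <= beta <= 1 ->
  0 <= dot a P -> 0 <= dot b (P - h *: a) ->
  dot (b - a) (b - a) <= nu ^+ 2 * dot a a ->
  dot (P - h *: (a - beta *: (a - b))) (P - h *: (a - beta *: (a - b)))
    <= dot P P - (2 * beta - 1 - beta ^+ 2 * nu ^+ 2) * h ^+ 2 * dot a a.
Proof.
move=> h0 /andP[beta0 beta1].
rewrite !(dotBl, dotBr, dotZl, dotZr) (dotC b a) (dotC P a) (dotC P b).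
move: (dot P P) (dot a P) (dot b P) (dot a a) (dot a b) (dot b b)
  => PP aP bP aa ab bb aP0 bP0 ba_le.
have cross_a : 0 <= 2 * h * (1 - beta) * aP.
  by rewrite !mulr_ge0 // subr_ge0.
have cross_b : 0 <= 2 * h * beta * (bP - h * ab).
  by rewrite !mulr_ge0.
have ratio : h ^+ 2 * beta ^+ 2 * (bb - ab - (ab - aa) - nu ^+ 2 * aa) <= 0.
  by apply: mulr_ge0_le0; [rewrite mulr_ge0 ?sqr_ge0 | lra].
nra.
Qed.

End InnerProduct.

Lemma kappa2_gt0 (R : realType) (nu beta : R) :
  0 < nu -> nu < 1 -> (1 - Num.sqrt (1 - nu ^+ 2)) / nu ^+ 2 < beta -> beta <= 1 ->
  0 < 2 * beta - 1 - beta ^+ 2 * nu ^+ 2.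
Proof.
move=> nu0 nu1 beta_lo beta1.
set s := Num.sqrt (1 - nu ^+ 2).
have s_sq : s ^+ 2 = 1 - nu ^+ 2 by rewrite sqr_sqrtr //; nra.
have s0 : 0 <= s := sqrtr_ge0 _.
have nu2_gt0 : 0 < nu ^+ 2 by rewrite exprn_gt0.
have beta_lo' : 1 - s < beta * nu ^+ 2 by rewrite -ltr_pdivrMr.
have beta_hi : beta * nu ^+ 2 <= 1 * nu ^+ 2 by rewrite ler_pM2r ?mul1r.
(* beta * nu^2 lies strictly between the roots 1 - s and 1 + s of
   t^2 - 2t + nu^2, whose value at t = beta nu^2 is -nu^2 kappa2. *)
have : 0 < (beta * nu ^+ 2 - 1 + s) * (1 + s - beta * nu ^+ 2).
  by rewrite mulr_gt0 //; nra.
have -> : (beta * nu ^+ 2 - 1 + s) * (1 + s - beta * nu ^+ 2)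
          = nu ^+ 2 * (2 * beta - 1 - beta ^+ 2 * nu ^+ 2) + (s ^+ 2 - (1 - nu ^+ 2)).
  by ring.
by rewrite s_sq subrr addr0 pmulr_rgt0.
Qed.

Lemma backtrack_step_ge (R : realType) (theta c nu gam r : R) :
  0 < theta -> 0 < c -> 0 < gam -> 0 < nu -> nu <= 1 -> nu < r -> r <= gam * c ->
  nu * theta / c <= gam * theta * Num.min 1 (1 / r).
Proof.
move=> theta0 c0 gam0 nu0 nu1 nu_r r_le.
have r0 : 0 < r by lra.
have nu_div_r : nu / r <= Num.min 1 (1 / r).
  by rewrite le_min ler_pM2r ?invr_gt0 // nu1 andbT ler_pdivrMr // mul1r ltW.
apply: (@le_trans _ _ (gam * theta * (nu / r))); last first.
  by rewrite ler_pM2l ?mulr_gt0.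
have : 1 <= gam * c / r by rewrite ler_pdivlMr // mul1r.
rewrite ler_pdivrMr // => gcr.
have : 0 < nu * theta by rewrite mulr_gt0.
nra.
Qed.

Lemma sum_le_telescope (R : realType) (d a : nat -> R) (N : nat) :
  (forall k, d k.+1 <= d k - a k) -> \sum_(k < N) a k <= d 0%N - d N.
Proof.
move=> step; elim: N => [|N IH]; first by rewrite big_ord0 subrr.
by rewrite big_ord_recr /=; have := step N; lra.
Qed.

Lemma mean_le_div (R : realType) (K : nat) (w S D : R) :
  (0 < K)%N -> 0 < w -> w * S <= D -> K%:R^-1 * S <= D / (K%:R * w).
Proof.
move=> K0 w0 wS_le; rewrite ler_pdivlMr ?mulr_gt0 ?ltr0n //.
have -> : K%:R^-1 * S * (K%:R * w) = w * S by field; rewrite pnatr_eq0 -lt0n.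
exact: wS_le.
Qed.

Lemma max1_le_scaled_sqr (R : realType) (L a : R) :
  1 <= a -> Num.max L 1 <= a * Num.max L 1 ^+ 2.
Proof.
move=> a1; have M1 : 1 <= Num.max L 1 by rewrite le_max lexx orbT.
apply: (@le_trans _ _ (Num.max L 1 ^+ 2)); first exact: ler_eXnr.
by rewrite ler_peMl ?sqr_ge0.
Qed.

Section Algorithm2.
Variables (R : realType) (n : nat) (g : 'rV[R]_n -> 'rV[R]_n).
Implicit Types (x : 'rV[R]_n).

Lemma rk_le_lipschitz L x gam :
  0 <= gam -> 0 <= L -> lipschitz_with L g -> rk g x gam <= gam * L.
Proof.
move=> gam0 L0 lipL; rewrite /rk.
have [->|dz_gt0] := eqVneq (enorm (zk g x gam - x)) 0.
  by rewrite invr0 mulr0 mulr_ge0.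
rewrite ler_pdivrMr ?lt_def ?dz_gt0 ?enorm_ge0 // -mulrA ler_wpM2l //.
Qed.

Lemma rk_le_ratio x gam nu :
  0 < gam -> g x != 0 -> rk g x gam <= nu ->
  enorm (g (zk g x gam) - g x) <= nu * enorm (g x).
Proof.
move=> gam0 gx0; have gx_gt0 := enorm_gt0 gx0; rewrite /rk.
have -> : zk g x gam - x = - gam *: g x by rewrite /zk addrAC subrr add0r scaleNr.
rewrite enormZ normrN gtr0_norm //.
by rewrite ler_pdivrMr ?mulr_gt0 // mulrCA ler_pM2l.
Qed.

Lemma dist_stationary_step xs x h nu beta :
  g xs = 0 -> pseudo_monotone g -> 0 < h -> 0 <= beta <= 1 ->
  g x != 0 -> rk g x h <= nu -> 0 <= nu ->
  dot (x - h *: (g x - beta *: (g x - g (zk g x h))) - xs)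
      (x - h *: (g x - beta *: (g x - g (zk g x h))) - xs)
  <= dot (x - xs) (x - xs)
     - (2 * beta - 1 - beta ^+ 2 * nu ^+ 2) * h ^+ 2 * dot (g x) (g x).
Proof.
move=> gxs pm h0 beta01 gx0 rk_le nu0.
have mono_at y : 0 <= dot (g y) (y - xs) by apply: pm; rewrite gxs dot0l.
have z_sub : zk g x h - xs = (x - xs) - h *: g x by rewrite /zk addrAC.
have ratio : dot (g (zk g x h) - g x) (g (zk g x h) - g x) <= nu ^+ 2 * dot (g x) (g x).
  rewrite -!enorm_sq -exprMn ler_pXn2r ?nnegrE ?mulr_ge0 ?enorm_ge0 //.
  exact: rk_le_ratio.
rewrite addrAC; apply: dist_extragradient_step => //; first exact: ltW.
by rewrite -z_sub.
Qed.

Lemma bt_ge_min theta c nu x gam0 lk :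
  0 < theta -> 0 < c -> 0 < nu -> nu <= 1 -> 0 < gam0 ->
  (forall gam, 0 < gam -> rk g x gam <= gam * c) ->
  (forall l, (l < lk)%N -> nu < rk g x (bt theta g x gam0 l)) ->
  Num.min gam0 (nu * theta / c) <= bt theta g x gam0 lk.
Proof.
move=> theta0 c0 nu0 nu1 gam0_gt0 rk_le.
elim: lk => [|l IH] rejected /=; first by rewrite ge_min lexx.
have bt_gt0 : 0 < bt theta g x gam0 l.
  apply: lt_le_trans (IH _); first by rewrite lt_min gam0_gt0 !divr_gt0 ?mulr_gt0.
  by move=> l' /ltnW; apply: rejected.
rewrite ge_min; apply/orP; right.
by apply: backtrack_step_ge => //; [apply: rejected | apply: rk_le].
Qed.

Section Run.
Variables (mu nu hlo hhi theta tau beta : R) (x0 : 'rV[R]_n).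
Variables (x : nat -> 'rV[R]_n) (h gam0 : nat -> R).
Hypothesis run : algorithm2 g mu nu hlo hhi theta tau beta x0 x h gam0.

Lemma alg2_gam0_ge : hlo <= gam0 0%N -> forall k, hlo <= gam0 k.
Proof.
move=> lo0 [//|k]; have [_ [_ ->]] := run.2 k.
by case: ifP => _; rewrite /proj_itv le_max lexx.
Qed.

Lemma alg2_step_ge c :
  0 < hlo -> hlo <= gam0 0%N -> 0 < theta -> 0 < c -> 0 < nu -> nu <= 1 ->
  (forall y gam, 0 < gam -> rk g y gam <= gam * c) ->
  forall k, Num.min hlo (nu * theta / c) <= h k.
Proof.
move=> hlo0 lo0 theta0 c0 nu0 nu1 rk_le k.
have gam0_ge := alg2_gam0_ge lo0 k.
have [[lk [rejected [_ ->]]] _] := run.2 k.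
apply: le_trans (bt_ge_min theta0 c0 nu0 nu1 _ (rk_le _) rejected); last first.
  exact: lt_le_trans gam0_ge.
by rewrite le_min ge_min gam0_ge ge_min lexx orbT.
Qed.

Lemma alg2_dist_decrease xs k :
  g xs = 0 -> pseudo_monotone g -> 0 < h k -> 0 <= beta <= 1 -> 0 <= nu ->
  g (x k) != 0 ->
  dot (x k.+1 - xs) (x k.+1 - xs)
    <= dot (x k - xs) (x k - xs)
       - (2 * beta - 1 - beta ^+ 2 * nu ^+ 2) * h k ^+ 2 * dot (g (x k)) (g (x k)).
Proof.
move=> gxs pm hk0 beta01 nu0 gx0.
have [[lk [_ [rk_le hk]]] [-> _]] := run.2 k.
by apply: dist_stationary_step => //; rewrite hk.
Qed.

End Run.

End Algorithm2.

Theorem theorem4 (R : realType) (n : nat) (f : 'rV[R]_n -> R)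
  (g : 'rV[R]_n -> 'rV[R]_n) (L : R)
  (mu nu hlo hhi theta tau beta : R) (x0 : 'rV[R]_n)
  (x : nat -> 'rV[R]_n) (h : nat -> R) (gam0 : nat -> R) :
  is_gradient f g ->
  pseudo_monotone g ->
  0 <= L -> lipschitz_with L g ->
  (exists xs, g xs = 0) ->
  0 < mu -> mu < nu -> nu < 1 ->
  0 < hlo -> hlo < 1 -> 1 <= gam0 0%N -> gam0 0%N <= hhi ->
  0 < theta -> theta < 1 -> 1 < tau ->
  (1 - Num.sqrt (1 - nu ^+ 2)) / nu ^+ 2 < beta -> beta <= 1 ->
  algorithm2 g mu nu hlo hhi theta tau beta x0 x h gam0 ->
  (forall k, g (x k) != 0) ->
  forall xs, g xs = 0 ->
  forall K : nat, (1 <= K)%N ->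
  let kappa2 := 2 * beta - 1 - beta ^+ 2 * nu ^+ 2 in
  let hmin := Num.min hlo (nu * theta / (hhi * (Num.max L 1) ^+ 2)) in
  K%:R^-1 * \sum_(k < K) enorm (g (x k)) ^+ 2
    <= enorm (x0 - xs) ^+ 2 / (K%:R * kappa2 * hmin ^+ 2).
Proof.
move=> _ pm L0 lipL _ mu0 mu_nu nu1 hlo0 hlo1 gam00 gam0_hi theta0 _ _ beta_lo beta1
  run gx0 xs gxs K K1 /=.
set kappa2 := 2 * beta - 1 - _ * _.
set c := hhi * Num.max L 1 ^+ 2.
set hmin := Num.min hlo _.
have nu0 : 0 < nu by lra.
have kappa2_gt0 : 0 < kappa2 by apply: kappa2_gt0.
have beta0 : 0 <= beta.
  by move: kappa2_gt0; have := mulr_ge0 (sqr_ge0 beta) (sqr_ge0 nu); rewrite /kappa2; lra.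
have M_le_c : Num.max L 1 <= c by apply/max1_le_scaled_sqr/(le_trans gam00).
have c0 : 0 < c by apply: lt_le_trans M_le_c; rewrite lt_max ltr01 orbT.
have hmin0 : 0 < hmin by rewrite lt_min hlo0 /= divr_gt0 // mulr_gt0.
have hmin_le k : hmin <= h k.
  apply: (alg2_step_ge run) => //; first exact: le_trans (ltW hlo1) gam00.
    exact: ltW.
  move=> y gam gam_gt0.
  apply: le_trans (rk_le_lipschitz _ (ltW gam_gt0) L0 lipL) _.
  by rewrite ler_pM2l // (le_trans _ M_le_c) ?le_max ?lexx.
have decrease k : dot (x k.+1 - xs) (x k.+1 - xs)
    <= dot (x k - xs) (x k - xs) - kappa2 * hmin ^+ 2 * dot (g (x k)) (g (x k)).
  apply: le_trans (alg2_dist_decrease run gxs pm _ _ (ltW nu0) (gx0 k)) _.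
  - exact: lt_le_trans (hmin_le k).
  - by rewrite beta0.
  rewrite lerD2l lerN2 ler_wpM2r ?dot_ge0 // ler_wpM2l ?(ltW kappa2_gt0) //.
  by rewrite ler_pXn2r ?nnegrE ?(ltW hmin0) ?(le_trans (ltW hmin0)).
have := sum_le_telescope K decrease.
rewrite -mulr_sumr run.1 => sum_le.
rewrite enorm_sq; under eq_bigr do rewrite enorm_sq.
rewrite -mulrA; apply: mean_le_div => //; first by rewrite mulr_gt0 ?exprn_gt0.
by have := dot_ge0 (x K - xs); lra.
Qed.
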